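(* The collinearity graph of $\mathcal{S}$ is connected and has diameter $3$.
   Context: Let $S=(P,L)$ and $S'=(P',L')$ be generalized quadrangles of order $(2,2)$ (every line has 3 points, every point lies on 3 lines, and for each point $x$ and line $l\not\ni x$ exactly one point of $l$ is collinear with $x$), with an isomorphism $x\mapsto x'$ from $S$ to $S'$. In a point-line geometry, $x^{\perp}$ is $x$ together with all points collinear with $x$, and $A^{\perp}=\bigcap_{a\in A}a^{\perp}$. A triad is a set of three pairwise non-collinear points, complete if $|T^{\perp}|=3$. The geometry $\mathcal{S}=(\mathcal{P},\mathcal{L})$ has point set $\mathcal{P}=\{(x,y')\in P\times P':y'\in x'^{\perp}\}$ and lines all $3$-subsets $\{(x,u'),(y,v'),(z,w')\}$ of $\mathcal{P}$ where $T=\{x,y,z\}$ (three distinct points) is a line or a complete triad of $S$ and $\{u',v',w'\}=T'^{\perp}$ in $S'$ with $u',v',w'$ distinct. The collinearity graph has vertex set $\mathcal{P}$, two distinct points adjacent when they lie on a common line. *)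

From mathcomp Require Import all_boot.
Set Implicit Arguments. Unset Strict Implicit. Unset Printing Implicit Defensive.

Section Geometry.
Variable P : finType.
Variable L : {set {set P}}.

Definition collinear (x y : P) : bool := [exists l in L, (x \in l) && (y \in l)].

Definition perp (x : P) : {set P} := [set y | (y == x) || collinear x y].

Definition perpS (A : {set P}) : {set P} := \bigcap_(a in A) perp a.

Definition triad (T : {set P}) : bool :=
  (#|T| == 3) && [forall x in T, forall y in T, (x != y) ==> ~~ collinear x y].

Definition complete_triad (T : {set P}) : bool := triad T && (#|perpS T| == 3).

Definition is_GQ22 : Prop :=
  [/\ 0 < #|P|,
      forall l, l \in L -> #|l| = 3,
      forall x : P, #|[set l in L | x \in l]| = 3 &
      forall (x : P) l, l \in L -> x \notin l -> #|[set y in l | collinear x y]| = 1].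
End Geometry.

Definition is_iso (P P' : finType) (L : {set {set P}}) (L' : {set {set P'}}) (f : P -> P') : Prop :=
  bijective f /\ L' = [set f @: (l : {set P}) | l in L].

Section Construction.
Variables (P P' : finType) (L : {set {set P}}) (L' : {set {set P'}}) (f : P -> P').

Definition calP_pred (p : P * P') : bool := p.2 \in perp L' (f p.1).
Definition calP : finType := {p : P * P' | calP_pred p}.

(* lines: 3-subsets {(x,u'),(y,v'),(z,w')} with T = {x,y,z} three distinct points forming
   a line or a complete triad of S, and {u',v',w'} = T'^perp with u',v',w' distinct *)
Definition is_calLine (Lc : {set calP}) : bool :=
  [exists a : calP, exists b : calP, exists c : calP,
    let x := (val a).1 in let y := (val b).1 in let z := (val c).1 in
    let u := (val a).2 in let v := (val b).2 in let w := (val c).2 in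
    let T := [set x; y; z] in
    [&& Lc == [set a; b; c], x != y, y != z, x != z,
        (T \in L) || complete_triad L T,
        u != v, v != w, u != w &
        [set u; v; w] == perpS L' (f @: T)]].

Definition calAdj : rel calP :=
  fun a b => (a != b) && [exists Lc : {set calP}, [&& is_calLine Lc, a \in Lc & b \in Lc]].

Definition within (k : nat) (a b : calP) : Prop :=
  exists s : seq calP, size s <= k /\ path calAdj a s /\ last a s = b.
End Construction.

Arguments calP_pred {P P'} L' f p.
Arguments calP {P P'} L' f.
Arguments is_calLine {P P'} L L' f Lc.
Arguments calAdj {P P'} L L' f.
Arguments within {P P'} L L' f k a b.

From mathcomp Require Import all_boot.
Set Implicit Arguments. Unset Strict Implicit. Unset Printing Implicit Defensive.

(* Transport S' back to S along the isomorphism and write a vertex as (x, u) with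
   u in x^perp.  Then (x, u) and (y, v) are adjacent exactly when x != y, u != v,
   u in y^perp and v in x^perp: the line of the new geometry through them lies over
   the line xy when x ~ y, and over a complete triad {x, y, z} otherwise, which
   exists because every point of a GQ of order 2 is regular.  Each vertex (x, u)
   with x != u is adjacent to the diagonal vertex (z, z), z the third point of the
   line xu, and the diagonal vertices span a copy of the collinearity graph of S,
   which has diameter 2; when the diagonal neighbours of two vertices are not
   collinear, a case analysis on the position of the two lines still gives a path of
   length at most 3.  Finally (x, x) and (y, u), with x, y not collinear and u in
   {x, y}^perp, are at distance 3. *)

Section Triples.
Variable T : finType.
Implicit Types (A : {set T}) (x y z : T).

Lemma set3C12 x y z : [set y; x; z] = [set x; y; z].
Proof. by apply/setP => w; rewrite !inE (orbC (w == y)). Qed.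

Lemma set31 x y z : x \in [set x; y; z]. Proof. by rewrite !inE eqxx. Qed.
Lemma set32 x y z : y \in [set x; y; z]. Proof. by rewrite !inE eqxx orbT. Qed.
Lemma set33 x y z : z \in [set x; y; z]. Proof. by rewrite !inE eqxx orbT. Qed.

Lemma cards3_neq x y z : #|[set x; y; z]| = 3 -> [/\ x != y, y != z & x != z].
Proof.
have card2 (a b : T) : #|[set a; b]| != 3 by rewrite cards2; case: (a != b).
move=> c3; split; apply/eqP => E; move: c3; rewrite E.
- by rewrite setUid; apply/eqP.
- by rewrite -setUA setUid; apply/eqP.
- by rewrite setUAC setUid; apply/eqP.
Qed.

Lemma card_set3 x y z : x != y -> y != z -> x != z -> #|[set x; y; z]| = 3.
Proof. by move=> xy yz xz; rewrite -setUA cardsU1 cards2 !inE negb_or xy xz yz. Qed.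

Lemma set3_eq A x y z : #|A| = 3 -> x \in A -> y \in A -> z \in A ->
  x != y -> y != z -> x != z -> A = [set x; y; z].
Proof.
move=> cA xA yA zA xy yz xz; apply/eqP; rewrite eq_sym eqEcard cA card_set3 // leqnn andbT.
by apply/subsetP => w; rewrite !inE => /orP[/orP[]|] /eqP->.
Qed.

Lemma set3_other A x y : #|A| = 3 -> exists2 z, z \in A & (z != x) && (z != y).
Proof.
move=> cA; have : 0 < #|A :\: [set x; y]|.
  rewrite cardsD cA subn_gt0 (leq_ltn_trans (subset_leq_card (subsetIr _ _))) //.
  by rewrite cards2; case: (x != y).
by case/card_gt0P => z; rewrite !inE negb_or => /andP[/andP[zx zy] zA]; exists z; rewrite ?zx.
Qed.

Lemma set3_map_neq (T' : eqType) (h : T -> T') x y z p q :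
  h x != h y -> h y != h z -> h x != h z ->
  p \in [set x; y; z] -> q \in [set x; y; z] -> p != q -> h p != h q.
Proof.
move=> hxy hyz hxz; rewrite !inE => /orP[/orP[]|] /eqP-> /orP[/orP[]|] /eqP->;
  by rewrite ?eqxx // => _; rewrite 1?eq_sym.
Qed.

Lemma imset_set3 (T' : finType) (h : T -> T') x y z :
  h @: [set x; y; z] = [set h x; h y; h z].
Proof. by rewrite !imsetU !imset_set1. Qed.

End Triples.

Section GeneralizedQuadrangle.
Context {P : finType} {L : {set {set P}}}.
Hypothesis gq : is_GQ22 L.

Local Notation col := (collinear L).
Local Notation line3 x y z := ([set x; y; z] \in L).
Implicit Types (l m : {set P}) (a b c d p q r s t u v w x y z : P).

Lemma line_card l : l \in L -> #|l| = 3.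
Proof. by case: gq => _ + _ _; apply. Qed.

Lemma card_lines_through x : #|[set l in L | x \in l]| = 3.
Proof. by case: gq => _ _ + _; apply. Qed.

Lemma card_proj x l : l \in L -> x \notin l -> #|[set y in l | col x y]| = 1.
Proof. by case: gq => _ _ _; apply. Qed.

Lemma collinearP x y : reflect (exists2 l, l \in L & (x \in l) && (y \in l)) (col x y).
Proof.
by apply: (iffP existsP) => [[l /andP[]]|[l lL xyl]]; [exists l | exists l; rewrite lL].
Qed.

Lemma col_line l x y : l \in L -> x \in l -> y \in l -> col x y.
Proof. by move=> lL xl yl; apply/collinearP; exists l; rewrite ?xl. Qed.

Lemma col_sym x y : col x y = col y x.
Proof. by apply/collinearP/collinearP => -[l lL /andP[xl yl]]; exists l; rewrite ?xl ?yl. Qed.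

Lemma col_refl x : col x x.
Proof.
have /card_gt0P[l] : 0 < #|[set l in L | x \in l]| by rewrite card_lines_through.
by rewrite inE => /andP[lL xl]; exact: (col_line lL xl xl).
Qed.

Lemma ncol_neq x y : ~~ col x y -> x != y.
Proof. by apply: contraNneq => ->; apply: col_refl. Qed.

Lemma in_perp x y : (y \in perp L x) = col x y.
Proof. by rewrite inE; case: eqP => // ->; rewrite col_refl. Qed.

Lemma line3_neq x y z : line3 x y z -> [/\ x != y, y != z & x != z].
Proof. by move/line_card/cards3_neq. Qed.

Lemma on_line l x y w : l \in L -> x \in l -> y \in l -> x != y ->
  col w x -> col w y -> w \in l.
Proof.
move=> lL xl yl xy wx wy; apply/negPn/negP => /(card_proj lL)/eqP.
by apply/negP; rewrite eqn_leq negb_and -ltnNge; apply/orP; left;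
   apply/card_gt1P; exists x, y; rewrite !inE xl yl wx wy.
Qed.

Lemma line_uniq l m x y : l \in L -> m \in L -> x != y ->
  x \in l -> y \in l -> x \in m -> y \in m -> l = m.
Proof.
move=> lL mL xy xl yl xm ym; apply/eqP; rewrite eqEcard !line_card // leqnn andbT.
by apply/subsetP => w wl; apply: (on_line mL xm ym xy); apply: col_line lL _ _.
Qed.

Lemma proj_on_line l w : l \in L -> exists2 p, p \in l & col w p.
Proof.
move=> lL; case: (boolP (w \in l)) => [wl|wl]; first by exists w; rewrite ?col_refl.
have /card_gt0P[p] : 0 < #|[set y in l | col w y]| by rewrite (card_proj lL).
by rewrite inE => /andP[]; exists p.
Qed.

Lemma proj3 x y z w : line3 x y z -> [|| col w x, col w y | col w z].
Proof. by move=> /(proj_on_line w)[p]; rewrite !inE => /orP[/orP[]|] /eqP-> ->; rewrite ?orbT. Qed.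

Lemma line_of x y : col x y -> x != y -> exists z, line3 x y z.
Proof.
case/collinearP => l lL /andP[xl yl] xy.
have [z zl /andP[zx zy]] := set3_other x y (line_card lL).
by exists z; rewrite -(set3_eq (line_card lL) xl yl zl) // eq_sym.
Qed.

Lemma exists_line_avoiding p a b : a != p -> b != p ->
  exists2 l, l \in L & [&& p \in l, a \notin l & b \notin l].
Proof.
move=> ap bp; pose through c := [set l in L | (p \in l) && (c \in l)].
have le1 c : c != p -> #|through c| <= 1.
  move=> cp; apply/card_le1_eqP => l m.
  rewrite !inE => /andP[lL /andP[pl cl]] /andP[mL /andP[pm cm]].
  exact: line_uniq mL lL cp cm pm cl pl.
have : ~~ ([set l in L | p \in l] \subset through a :|: through b).
  apply/negP => /subset_leq_card; rewrite card_lines_through; apply/negP; rewrite -ltnNge.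
  by rewrite cardsU (leq_ltn_trans (leq_subr _ _)) // ltnS; exact: leq_add (le1 a ap) (le1 b bp).
case/subsetPn => l; rewrite !inE => /andP[lL pl]; rewrite lL pl /= negb_or => /andP[al bl].
by exists l; rewrite ?pl ?al.
Qed.

Lemma col_of_three_lines w a b c d : col w a -> col w b -> col w c -> col w d ->
  ~~ col a b -> ~~ col a c -> ~~ col b c -> [|| col d a, col d b | col d c].
Proof.
move=> /collinearP[la laL /andP[wla ala]] /collinearP[lb lbL /andP[wlb blb]].
move=> /collinearP[lc lcL /andP[wlc clc]] /collinearP[ld ldL /andP[wld dld]] nab nac nbc.
have neq l m s t : s \in l -> t \in m -> l \in L -> ~~ col s t -> l != m.
  by move=> sl tm lL; apply: contraNneq => E; rewrite -E in tm; exact: col_line lL sl tm.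
have lines : [set l in L | w \in l] = [set la; lb; lc].
  by apply: set3_eq; rewrite ?card_lines_through ?inE ?laL ?lbL ?lcL ?wla ?wlb ?wlc //;
     [exact: neq ala blb laL nab | exact: neq blb clc lbL nbc | exact: neq ala clc laL nac].
have : ld \in [set la; lb; lc] by rewrite -lines inE ldL wld.
by rewrite !inE => /orP[/orP[]|] /eqP E; subst ld;
   rewrite ?(col_line laL dld ala) ?(col_line lbL dld blb) ?(col_line lcL dld clc) ?orbT.
Qed.

Lemma eq_of_col_two_lines x a b w : col x a -> col x b -> ~~ col a b ->
  col w x -> col w a -> col w b -> w = x.
Proof.
move=> /collinearP[l lL /andP[xl al]] /collinearP[m mL /andP[xm bm]] nab wx wa wb.
apply/eqP/negPn/negP => wnx.
have xa : x != a by apply: contraNneq nab => <-; exact: col_line mL xm bm.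
have xb : x != b by apply: contraNneq nab => <-; rewrite col_sym; exact: col_line lL xl al.
have wl := on_line lL xl al xa wx wa; have wm := on_line mL xm bm xb wx wb.
rewrite (line_uniq lL mL wnx wl xl wm xm) in al.
by case/negP: nab; exact: col_line mL al bm.
Qed.

Definition in_perp2 x y a := col a x && col a y.

Lemma exists_perp2_avoiding y x a b : a != x -> b != x ->
  exists c, [/\ in_perp2 x y c, c != a & c != b].
Proof.
move=> ax bx; have [l lL /and3P[xl al bl]] := exists_line_avoiding ax bx.
have [c cl yc] := proj_on_line y lL.
by exists c; rewrite /in_perp2 (col_line lL cl xl) col_sym yc; split=> //;
  [apply: contraNneq al | apply: contraNneq bl] => <-.
Qed.

Section PerpOfNoncollinearPair.
Context {x y : P}.
Hypothesis nxy : ~~ col x y.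

Lemma perp2_neql a : in_perp2 x y a -> a != x.
Proof. by case/andP=> _; apply: contraTneq => ->. Qed.

Lemma perp2_neqr a : in_perp2 x y a -> a != y.
Proof. by case/andP=> + _; apply: contraTneq => ->; rewrite col_sym. Qed.

Lemma perp2_ncol a b : in_perp2 x y a -> in_perp2 x y b -> a != b -> ~~ col a b.
Proof.
move=> /andP[ax ay] /andP[bx by_] ab; apply/negP => /line_of/(_ ab)[c abc].
have onl w : col w a -> col w b -> w \in [set a; b; c] := on_line abc (set31 _ _ _) (set32 _ _ _) ab.
by case/negP: nxy; apply: col_line abc (onl _ _ _) (onl _ _ _); rewrite col_sym.
Qed.

Lemma perp2_in_set3 u v w p : in_perp2 x y u -> in_perp2 x y v -> in_perp2 x y w ->
  in_perp2 x y p -> u != v -> u != w -> v != w -> p \in [set u; v; w].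
Proof.
move=> pu pv pw pp uv uw vw.
have col_x a : in_perp2 x y a -> col x a by case/andP; rewrite col_sym.
have col_eq a : in_perp2 x y a -> col p a -> p = a.
  by move=> pa; apply: contraTeq => pna; apply: perp2_ncol pp pa pna.
have := col_of_three_lines (col_x _ pu) (col_x _ pv) (col_x _ pw) (col_x _ pp)
  (perp2_ncol pu pv uv) (perp2_ncol pu pw uw) (perp2_ncol pv pw vw).
by case/or3P => [/(col_eq _ pu)|/(col_eq _ pv)|/(col_eq _ pw)] ->; rewrite !inE eqxx ?orbT.
Qed.

Lemma perp2_line_ncol c s t d : line3 c s t -> s \in [set x; y] ->
  in_perp2 x y c -> in_perp2 x y d -> d != c -> ~~ col t d.
Proof.
move=> cst sxy pc pd dc; apply/negP => td; have [_ st _] := line3_neq cst.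
have ds : col d s by move: sxy; rewrite !inE => /orP[] /eqP->; case/andP: pd.
have dt : col d t by rewrite col_sym.
move: (on_line cst (set32 _ _ _) (set33 _ _ _) st ds dt).
rewrite !inE (negbTE dc) /= => /orP[/eqP ds_|/eqP dt_].
  by move: sxy; rewrite !inE -ds_ (negbTE (perp2_neql pd)) (negbTE (perp2_neqr pd)).
by case/negP: (perp2_ncol pd pc dc); rewrite dt_; apply: col_line cst _ _; rewrite ?set31 ?set33.
Qed.

(* Every point of a GQ of order 2 is regular.  If w is neither x, y nor collinear
   with c, it is collinear with the third points r, r' of the lines cx and cy; these
   lie on the third line through w, and c, collinear with both, lies on it too. *)
Lemma perp2_regular a b c w : in_perp2 x y a -> in_perp2 x y b -> in_perp2 x y c ->
  a != b -> a != c -> b != c -> col w a -> col w b -> col w c.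
Proof.
move=> pa pb pc ab ac bc wa wb.
have [xa ya] := andP pa; have [xb yb] := andP pb; have [xc yc] := andP pc.
have nab := perp2_ncol pa pb ab.
case: (boolP (col w x)) => [wx|nwx].
  by rewrite (@eq_of_col_two_lines x a b w) // col_sym.
case: (boolP (col w y)) => [wy|nwy].
  by rewrite (@eq_of_col_two_lines y a b w) // col_sym.
case: (boolP (col w c)) => // nwc.
have [r cxr] := line_of xc (perp2_neql pc); have [r' cyr'] := line_of yc (perp2_neqr pc).
have wr : col w r by move: (proj3 w cxr); rewrite (negbTE nwc) (negbTE nwx).
have wr' : col w r' by move: (proj3 w cyr'); rewrite (negbTE nwc) (negbTE nwy).
have nra := perp2_line_ncol cxr (set21 x y) pc pa ac.
have nrb := perp2_line_ncol cxr (set21 x y) pc pb bc.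
have nr'a := perp2_line_ncol cyr' (set22 x y) pc pa ac.
have nr'b := perp2_line_ncol cyr' (set22 x y) pc pb bc.
have := col_of_three_lines wa wb wr wr' nab; rewrite !(col_sym _ r) nra nrb.
rewrite (negbTE nr'a) (negbTE nr'b) => /(_ isT isT) /=.
move=> rr'; have rnr' : r != r'.
  apply/eqP => E; subst r'; have [_ _ cr] := line3_neq cxr.
  have pr : in_perp2 x y r by rewrite /in_perp2 (col_line cxr) ?(col_line cyr') ?set32 ?set33.
  by case/negP: (perp2_ncol pr pc (contra_neq esym cr)); apply: col_line cxr _ _; rewrite ?set31 ?set33.
have [t rr't] := line_of rr' rnr'.
have onR p : col p r -> col p r' -> p \in [set r; r'; t].
  exact: on_line rr't (set31 _ _ _) (set32 _ _ _) rnr'.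
have cR : c \in [set r; r'; t].
  by apply: onR; [apply: col_line cxr _ _ | apply: col_line cyr' _ _]; rewrite ?set31 ?set33.
by rewrite (col_line rr't (onR _ wr wr') cR) in nwc.
Qed.

End PerpOfNoncollinearPair.

Lemma in_perpS3 x y z w : (w \in perpS L [set x; y; z]) = [&& col x w, col y w & col z w].
Proof.
apply/bigcapP/and3P => [H|[xw yw zw] a].
  by rewrite -!in_perp; split; apply: H; rewrite ?set31 ?set32 ?set33.
by rewrite in_perp !inE => /orP[/orP[]|] /eqP->.
Qed.

Lemma perpS_line x y z : line3 x y z -> perpS L [set x; y; z] = [set x; y; z].
Proof.
move=> xyz; have [xy _ _] := line3_neq xyz; apply/setP => w; rewrite in_perpS3.
apply/and3P/idP => [[xw yw _]|wl].
  by apply: (on_line xyz (set31 _ _ _) (set32 _ _ _) xy); rewrite col_sym.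
by split; apply: col_line xyz _ wl; rewrite ?set31 ?set32 ?set33.
Qed.

Lemma span_line x y u v : col x y -> x != y -> col u x -> col u y -> col v x -> col v y ->
  u != v -> exists z w, [/\ line3 x y z, w != u, w != v &
                             perpS L [set x; y; z] = [set u; v; w]].
Proof.
move=> cxy xy ux uy vx vy uv; have [z xyz] := line_of cxy xy.
have onT p : col p x -> col p y -> p \in [set x; y; z].
  exact: on_line xyz (set31 _ _ _) (set32 _ _ _) xy.
have [w wT /andP[wu wv]] := set3_other u v (line_card xyz).
have [uT vT] := (onT u ux uy, onT v vx vy).
exists z, w; split; rewrite // perpS_line //.
by apply: set3_eq; rewrite ?line_card // eq_sym.
Qed.

Lemma span_triad x y u v : ~~ col x y -> col u x -> col u y -> col v x -> col v y ->
  u != v -> exists z w, [/\ complete_triad L [set x; y; z], w != u, w != v &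
                             perpS L [set x; y; z] = [set u; v; w]].
Proof.
move=> nxy ux uy vx vy uv.
have [pu pv] : in_perp2 x y u /\ in_perp2 x y v by rewrite /in_perp2 ux uy vx vy.
have [w [pw wu wv]] := exists_perp2_avoiding y (perp2_neql nxy pu) (perp2_neql nxy pv).
have nuv := perp2_ncol nxy pu pv uv.
have px : in_perp2 u v x by rewrite /in_perp2 !(col_sym x) ux vx.
have py : in_perp2 u v y by rewrite /in_perp2 !(col_sym y) uy vy.
have [z [pz zx zy]] := exists_perp2_avoiding v (perp2_neql nuv px) (perp2_neql nuv py).
have pT p : p \in [set x; y; z] -> in_perp2 u v p by rewrite !inE => /orP[/orP[]|] /eqP->.
have [xy yz xz] : [/\ x != y, y != z & x != z] by rewrite ncol_neq // !(eq_sym _ z).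
have [uw vw] : u != w /\ v != w by rewrite !(eq_sym _ w).
have [[wx wy] [zu zv]] := (andP pw, andP pz).
have wz : col w z := perp2_regular nuv px py pz xy xz yz wx wy.
have perpT : perpS L [set x; y; z] = [set u; v; w].
  apply/setP => p; rewrite in_perpS3; apply/and3P/idP => [[xp yp _]|].
    by apply: (perp2_in_set3 nxy pu pv pw) => //; rewrite /in_perp2 !(col_sym p) xp.
  rewrite !inE => /orP[/orP[]|] /eqP->; rewrite (col_sym x) (col_sym y).
  - by rewrite ux uy zu.
  - by rewrite vx vy zv.
  - by rewrite (col_sym z) wx wy wz.
exists z, w; split => //; rewrite /complete_triad /triad perpT !card_set3 // eqxx andbT /=.
apply/forall_inP => p pT'; apply/forall_inP => q qT; apply/implyP.
by move=> pq; have := perp2_ncol nuv (pT p pT') (pT q qT); apply.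
Qed.

Lemma span_line_or_triad x y u v : x != y -> col u x -> col u y -> col v x -> col v y ->
  u != v -> exists z w, [/\ [/\ y != z & x != z], line3 x y z || complete_triad L [set x; y; z],
                            w != u, w != v & perpS L [set x; y; z] = [set u; v; w]].
Proof.
move=> xy ux uy vx vy uv; case: (boolP (col x y)) => [cxy|nxy].
  have [z [w [xyz wu wv pT]]] := span_line cxy xy ux uy vx vy uv.
  by exists z, w; have [_ ? ?] := line3_neq xyz; rewrite xyz.
have [z [w [ct wu wv pT]]] := span_triad nxy ux uy vx vy uv.
by exists z, w; rewrite ct orbT; case/andP: ct => /andP[/eqP/cards3_neq[_ ? ?] _] _.
Qed.

End GeneralizedQuadrangle.

Section Isomorphism.
Context {P P' : finType} {L : {set {set P}}} {L' : {set {set P'}}}.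
Context {f : P -> P'} {fi : P' -> P}.
Hypotheses (fK : cancel f fi) (fiK : cancel fi f).
Hypothesis fL : L' = [set f @: l | l : {set P} in L].

Let f_inj : injective f := can_inj fK.

Lemma collinear_iso x y : collinear L' (f x) (f y) = collinear L x y.
Proof.
apply/existsP/existsP => -[l /andP[lL xyl]].
  move: lL xyl; rewrite fL => /imsetP[m mL ->]; exists m.
  by rewrite mL -!(mem_imset _ _ f_inj).
by exists (f @: l); rewrite fL (mem_imset _ _ (imset_inj f_inj)) !(mem_imset _ _ f_inj) lL.
Qed.

Lemma perp_iso x : perp L' (f x) = f @: perp L x.
Proof.
apply/setP => y'; rewrite -(fiK y') (mem_imset _ _ f_inj) !inE (inj_eq f_inj).
by rewrite collinear_iso.
Qed.

Lemma perpS_iso (A : {set P}) : perpS L' (f @: A) = f @: perpS L A.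
Proof.
apply/setP => y'; rewrite -(fiK y') (mem_imset _ _ f_inj).
apply/bigcapP/bigcapP => [H a aA|H _ /imsetP[a aA ->]].
  by have := H (f a) (imset_f f aA); rewrite perp_iso (mem_imset _ _ f_inj).
by rewrite perp_iso (mem_imset _ _ f_inj); apply: H.
Qed.

End Isomorphism.

Section CollinearityGraph.
Context {P P' : finType} {L : {set {set P}}} {L' : {set {set P'}}}.
Context {f : P -> P'} {fi : P' -> P}.
Hypothesis gq : is_GQ22 L.
Hypotheses (fK : cancel f fi) (fiK : cancel fi f).
Hypothesis fL : L' = [set f @: l | l : {set P} in L].

Local Notation col := (collinear L).
Local Notation line3 x y z := ([set x; y; z] \in L).
Local Notation V := (calP L' f).
Local Notation adj := (calAdj L L' f).
Local Notation within := (within L L' f).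
Implicit Types (a b c : V) (p q r u v w x y z : P).

Lemma in_perp_iso x (u' : P') : (u' \in perp L' (f x)) = col x (fi u').
Proof. by rewrite -{1}(fiK u') (perp_iso fK fiK fL) (mem_imset _ _ (can_inj fK)) in_perp. Qed.

Lemma calP_pred_col x u : col x u -> calP_pred L' f (x, f u).
Proof. by rewrite /calP_pred in_perp_iso fK. Qed.

Definition vtx x u (xu : col x u) : V := exist _ (x, f u) (calP_pred_col xu).

Lemma vtxP a : exists x u (xu : col x u), a = vtx xu.
Proof.
case: a => [[x u'] xu']; have xu : col x (fi u') by rewrite -in_perp_iso.
by exists x, (fi u'), xu; apply: val_inj; rewrite /= fiK.
Qed.

Lemma calLine_coords Lc a b : is_calLine L L' f Lc -> a \in Lc -> b \in Lc ->
  (val a).2 \in perp L' (f (val b).1) /\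
  (a != b -> ((val a).1 != (val b).1) && ((val a).2 != (val b).2)).
Proof.
case/existsP => a' /existsP[b' /existsP[c' /=]].
case/and5P => /eqP-> xy yz xz /and5P[_ uv vw uw /eqP perpT] aL bL; split.
  have : (val a).2 \in [set (val a').2; (val b').2; (val c').2].
    by move: aL; rewrite !inE => /orP[/orP[]|] /eqP->; rewrite eqxx ?orbT.
  rewrite perpT => /bigcapP; apply; apply: imset_f.
  by move: bL; rewrite !inE => /orP[/orP[]|] /eqP->; rewrite eqxx ?orbT.
by move=> ab; rewrite (set3_map_neq (h := fun p : V => (val p).1) xy yz xz aL bL ab)
                     (set3_map_neq (h := fun p : V => (val p).2) uv vw uw aL bL ab).
Qed.

Lemma adj_vtx x u y v (xu : col x u) (yv : col y v) :
  adj (vtx xu) (vtx yv) = [&& x != y, u != v, col y u & col x v].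
Proof.
have f_inj := can_inj fK.
apply/idP/idP => [/andP[ab /existsP[Lc /and3P[HL aL bL]]]|/and4P[xy uv yu xv]].
  have [/= + /(_ ab) /andP[/= -> fuv]] := calLine_coords HL aL bL.
  have [/= + _] := calLine_coords HL bL aL.
  by rewrite !in_perp_iso !fK (inj_eq f_inj) in fuv * => -> ->; rewrite fuv.
have [ux uy] : col u x /\ col u y by rewrite !(col_sym u).
have [vx vy] : col v x /\ col v y by rewrite !(col_sym v).
have [z [w [[yz xz] Tok wu wv perpT]]] := span_line_or_triad gq xy ux uy vx vy uv.
have zw : col z w by move: (set33 u v w); rewrite -perpT in_perpS3 // => /and3P[].
rewrite /calAdj; apply/andP; split; first by apply: contra_neq xy => /(congr1 (fun a => (val a).1)).
apply/existsP; exists [set vtx xu; vtx yv; vtx zw]; rewrite set31 set32 !andbT.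
apply/existsP; exists (vtx xu); apply/existsP; exists (vtx yv); apply/existsP; exists (vtx zw).
rewrite /= eqxx xy yz xz Tok !(inj_eq f_inj) uv eq_sym wv eq_sym wu /=.
by rewrite -imset_set3 (perpS_iso fK fiK fL) perpT.
Qed.

Lemma adjC a b : adj a b = adj b a.
Proof.
have [x [u [xu ->]]] := vtxP a; have [y [v [yv ->]]] := vtxP b.
by rewrite !adj_vtx eq_sym (eq_sym u) (andbC (col y u)).
Qed.

Lemma within0 k a : within k a a.
Proof. by exists [::]. Qed.

Lemma within_adj k a b : adj a b -> within k.+1 a b.
Proof. by exists [:: b]; rewrite /= andbT. Qed.

Lemma within_cat m n a b c : within m a b -> within n b c -> within (m + n) a c.
Proof.
move=> [s [sm [ps <-]]] [t [tn [pt <-]]].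
by exists (s ++ t); rewrite size_cat leq_add // cat_path ps pt last_cat.
Qed.

Lemma within_leq m n a b : m <= n -> within m a b -> within n a b.
Proof. by move=> mn [s [sm ps]]; exists s; rewrite (leq_trans sm mn). Qed.

Lemma within_rev k a b : within k a b -> within k b a.
Proof.
case=> s [sk [ps <-]]; exists (rev (belast a s)); rewrite size_rev size_belast sk.
split => //; split; last by case: s {sk ps} => [|c s] //; rewrite /= rev_cons last_rcons.
by rewrite rev_path; apply: sub_path ps => c d; rewrite adjC.
Qed.

Lemma calP_col a : col (val a).1 (fi (val a).2).
Proof. by rewrite -in_perp_iso; exact: valP a. Qed.

Definition swap a : V := vtx (etrans (col_sym _ _) (calP_col a)).

Lemma swap_vtx x u (xu : col x u) (ux : col u x) : swap (vtx xu) = vtx ux.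
Proof. by apply: val_inj; rewrite /= fK. Qed.

Lemma adj_swap a b : adj (swap a) (swap b) = adj a b.
Proof.
have [x [u [xu ->]]] := vtxP a; have [y [v [yv ->]]] := vtxP b.
have [ux vy] : col u x /\ col v y by rewrite !(col_sym u) !(col_sym v).
rewrite (swap_vtx xu ux) (swap_vtx yv vy) !adj_vtx.
by rewrite andbCA (andbC (col v x)) (col_sym y u) (col_sym x v).
Qed.

Lemma within_swap k a b : within k a b -> within k (swap a) (swap b).
Proof.
case=> s [sk [ps <-]]; exists (map swap s); rewrite size_map last_map; split=> //; split=> //.
by elim: s a {sk} ps => //= c s IH a /andP[ac ps]; rewrite adj_swap ac IH.
Qed.

Definition diag p := vtx (col_refl gq p).

Lemma vtx_diag x (xx : col x x) : vtx xx = diag x.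
Proof. exact: val_inj. Qed.

Lemma within1_diag p q : col p q -> within 1 (diag p) (diag q).
Proof.
case: (eqVneq p q) => [->|pq] cpq; first exact: within0.
by apply: within_adj; rewrite adj_vtx pq col_sym cpq.
Qed.

Lemma within2_diag p q : within 2 (diag p) (diag q).
Proof.
case: (boolP (col p q)) => [cpq|npq]; first exact: within_leq (within1_diag cpq).
have qp : q != p by rewrite eq_sym (ncol_neq gq npq).
have [r [/andP[rp rq] _ _]] := exists_perp2_avoiding gq q qp qp.
by apply: (@within_cat 1 1 _ (diag r)); apply: within1_diag; rewrite // col_sym.
Qed.

Lemma adj_diag_third x u z (xu : col x u) : line3 x u z -> adj (vtx xu) (diag z).
Proof.
move=> xuz; have [_ uz xz] := line3_neq gq xuz.
by rewrite adj_vtx xz uz !(col_line xuz) ?set31 ?set32 ?set33.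
Qed.

Lemma adj_vtx_swap x u (xu : col x u) (ux : col u x) : x != u -> adj (vtx xu) (vtx ux).
Proof. by move=> xnu; rewrite adj_vtx xnu eq_sym xnu !col_refl. Qed.

Lemma adj_vtx_shift x u z (xu : col x u) (uz : col u z) : line3 x u z -> adj (vtx xu) (vtx uz).
Proof.
move=> xuz; have [xnu unz _] := line3_neq gq xuz.
by rewrite adj_vtx xnu unz (col_refl gq) (col_line xuz) ?set31 ?set33.
Qed.

Lemma within2_same_fst x u v (xu : col x u) (xv : col x v) :
  ~~ col u v -> within 2 (vtx xu) (vtx xv).
Proof.
move=> nuv; have xnu : x != u by apply: contraNneq nuv => <-.
have xnv : x != v by apply: contraNneq nuv => <-; rewrite col_sym.
have [c [/andP[cu cv] cx _]] := exists_perp2_avoiding gq v xnu xnu.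
have ncx : ~~ col c x.
  by apply: contraNN cx => cx'; apply/eqP; exact: (eq_of_col_two_lines gq xu xv nuv cx' cu cv).
have [unx vnx] : u != x /\ v != x by rewrite !(eq_sym _ x).
have [d [/andP[dx dc] du dv]] := exists_perp2_avoiding gq c unx vnx.
have cd : col c d by rewrite col_sym.
apply: (@within_cat 1 1 _ (vtx cd)); apply: within_adj; rewrite adj_vtx.
  by rewrite eq_sym cx eq_sym du cu col_sym dx.
by rewrite cx dv col_sym dx cv.
Qed.

Lemma within2_same_snd u v x (ux : col u x) (vx : col v x) :
  ~~ col u v -> within 2 (vtx ux) (vtx vx).
Proof.
move=> nuv; have [xu xv] : col x u /\ col x v by rewrite !(col_sym x).
by rewrite -(swap_vtx xu ux) -(swap_vtx xv vx); apply/within_swap/within2_same_fst.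
Qed.

Lemma within3_diag x y v (yv : col y v) : within 3 (diag x) (vtx yv).
Proof.
case: (eqVneq y v) => [yv'|ynv].
  by subst v; rewrite vtx_diag; exact: within_leq (within2_diag x y).
have [z' yvz'] := line_of gq yv ynv.
apply: (@within_cat 2 1 _ (diag z') _ (within2_diag x z')).
exact/within_rev/within_adj/adj_diag_third.
Qed.

Section FarLines.
Context {x u z y v z' : P}.
Hypotheses (xuz : line3 x u z) (yvz' : line3 y v z') (nzz' : ~~ col z z') (z'x : col z' x).

Lemma far_z_neq : (z != y) && (z != v).
Proof.
by apply/andP; split; apply: contraNneq nzz' => ->; apply: col_line yvz' _ _;
   rewrite ?set31 ?set32 ?set33.
Qed.

Lemma far_meet p : p \in [set y; v; z'] -> p \in [set x; u; z] -> p = x.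
Proof.
have [xnu _ _] := line3_neq gq xuz; have /andP[zny znv] := far_z_neq.
move=> pm; rewrite !inE => /orP[/orP[]|] /eqP pE //; subst p.
  case/negP: nzz'; apply: col_line xuz (set33 _ _ _) _.
  apply: (on_line gq xuz (set31 _ _ _) (set32 _ _ _) xnu z'x).
  by apply: col_line yvz' (set33 _ _ _) pm.
by move: pm nzz'; rewrite !inE (negbTE zny) (negbTE znv) /= => /eqP->; rewrite col_refl.
Qed.

Lemma far_col_u : col u y || col u v.
Proof.
have [xnu _ _] := line3_neq gq xuz.
have nuz' : ~~ col u z'.
  apply: contraNN nzz' => uz'; apply: col_line xuz (set33 _ _ _) _.
  by apply: (on_line gq xuz (set31 _ _ _) (set32 _ _ _) xnu z'x); rewrite col_sym.
by have := proj3 gq u yvz'; rewrite (negbTE nuz') orbF.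
Qed.

Lemma within3_far_y (xu : col x u) (yv : col y v) : col z y -> within 3 (vtx xu) (vtx yv).
Proof.
move=> zy; have [xnu unz _] := line3_neq gq xuz; have [ynv _ _] := line3_neq gq yvz'.
case: (eqVneq x y) => [xy|xny].
  have nuv : ~~ col u v.
    apply/negP => uv; have vl : v \in [set x; u; z].
      by apply: (on_line gq xuz (set31 _ _ _) (set32 _ _ _) xnu); rewrite col_sym // xy.
    by move: ynv; rewrite -xy (far_meet (set32 _ _ _) vl) eqxx.
  by move: yv; rewrite -xy => xv; exact: within_leq (within2_same_fst xu xv nuv).
have nuy : ~~ col u y.
  apply: contraNN xny => uy; rewrite eq_sym; apply/eqP/far_meet; first exact: set31.
  by apply: (on_line gq xuz (set32 _ _ _) (set33 _ _ _) unz); rewrite col_sym.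
have uv : col u v by move: far_col_u; rewrite (negbTE nuy).
have uz : col u z := col_line xuz (set32 _ _ _) (set33 _ _ _).
have /andP[_ znv] := far_z_neq.
apply: (@within_cat 1 2 _ (vtx uz)); first exact/within_adj/adj_vtx_shift.
by apply: within_adj; rewrite adj_vtx (ncol_neq gq nuy) znv col_sym zy.
Qed.

Lemma within3_far_v (xu : col x u) (yv : col y v) : col z v -> within 3 (vtx xu) (vtx yv).
Proof.
move=> zv; have [xnu unz _] := line3_neq gq xuz; have [ynv _ _] := line3_neq gq yvz'.
case: (eqVneq x v) => [xv|xnv].
  have nuy : ~~ col u y.
    apply: contraNN ynv => uy; rewrite -xv; apply/eqP/far_meet; first exact: set31.
    by apply: (on_line gq xuz (set31 _ _ _) (set32 _ _ _) xnu); [rewrite xv | rewrite col_sym].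
  have ux : col u x by rewrite col_sym.
  move: yv; rewrite -xv => yx.
  apply: (@within_cat 1 2 _ (vtx ux)); last exact: within2_same_snd.
  exact/within_adj/adj_vtx_swap.
have nuv : ~~ col u v.
  apply: contraNN xnv => uv; rewrite eq_sym; apply/eqP/far_meet; first exact: set32.
  by apply: (on_line gq xuz (set32 _ _ _) (set33 _ _ _) unz); rewrite col_sym.
have uy : col u y by move: far_col_u; rewrite (negbTE nuv) orbF.
have uz : col u z := col_line xuz (set32 _ _ _) (set33 _ _ _).
have vy : col v y by rewrite col_sym.
have /andP[zny _] := far_z_neq.
apply: (@within_cat 1 2 _ (vtx uz)); first exact/within_adj/adj_vtx_shift.
apply: (@within_cat 1 1 _ (vtx vy)); last by apply/within_adj/adj_vtx_swap; rewrite eq_sym.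
by apply: within_adj; rewrite adj_vtx (ncol_neq gq nuv) zny col_sym zv uy.
Qed.

Lemma within3_far (xu : col x u) (yv : col y v) : within 3 (vtx xu) (vtx yv).
Proof.
case/or3P: (proj3 gq z yvz') => [zy|zv|zz']; first exact: (within3_far_y xu yv zy).
  exact: (within3_far_v xu yv zv).
by case/negP: nzz'.
Qed.

End FarLines.

Lemma within3_offdiag x u y v (xu : col x u) (yv : col y v) :
  x != u -> y != v -> within 3 (vtx xu) (vtx yv).
Proof.
move=> xnu ynv; have [z xuz] := line_of gq xu xnu; have [z' yvz'] := line_of gq yv ynv.
case: (boolP (col z z')) => [zz'|nzz'].
  apply: (@within_cat 1 2 _ (diag z)); first exact/within_adj/adj_diag_third.
  apply: (@within_cat 1 1 _ (diag z')); first exact: within1_diag.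
  exact/within_rev/within_adj/adj_diag_third.
case/or3P: (proj3 gq z' xuz) => [z'x|z'u|z'z]; first exact: (within3_far xuz yvz' nzz' z'x).
  have [ux vy] : col u x /\ col v y by rewrite !(col_sym u) !(col_sym v).
  rewrite -(swap_vtx ux xu) -(swap_vtx vy yv); apply: within_swap.
  by apply: (within3_far _ _ nzz' z'u); rewrite set3C12.
by rewrite col_sym z'z in nzz'.
Qed.

Lemma within3 a b : within 3 a b.
Proof.
have [x [u [xu ->]]] := vtxP a; have [y [v [yv ->]]] := vtxP b.
case: (eqVneq x u) => [xu'|xnu]; first by subst u; rewrite vtx_diag; exact: within3_diag.
case: (eqVneq y v) => [yv'|ynv]; last exact: within3_offdiag.
by subst v; rewrite vtx_diag; apply: within_rev; exact: within3_diag.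
Qed.

Lemma not_within2_diag x y v (yv : col y v) :
  ~~ col x y -> col x v -> ~ within 2 (diag x) (vtx yv).
Proof.
move=> nxy xv [[|b [|b' [|? ?]]] [//= _ [ps lst]]].
- by move/(congr1 (fun a => (val a).1)): lst => /= xy; rewrite xy col_refl in nxy.
- by move: ps; rewrite lst andbT adj_vtx col_sym (negbTE nxy) !andbF.
have [c [d [cd bE]]] := vtxP b; move: ps; rewrite lst bE andbT !adj_vtx.
case/andP => /and4P[xnc _ cx xd] /and4P[_ dnv yd cv].
have ndv : ~~ col d v.
  by apply: (perp2_ncol gq nxy) dnv; rewrite /in_perp2 ?(col_sym d) ?xd // (col_sym v) xv col_sym.
by move: xnc; rewrite (eq_of_col_two_lines gq xd xv ndv cx cd cv) eqxx.
Qed.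

Lemma exists_far_pair : exists a b, ~ within 2 a b.
Proof.
case: (gq) => /card_gt0P[x _] _ _ _.
have /card_gt0P[l] : 0 < #|[set l in L | x \in l]| by rewrite card_lines_through.
rewrite inE => /andP[lL xl].
have [a al /andP[ax _]] := set3_other x x (line_card gq lL).
have xna : x != a by rewrite eq_sym.
have [m mL /and3P[am xm _]] := exists_line_avoiding gq xna xna.
have [c cm /andP[ca _]] := set3_other a a (line_card gq mL).
have xa := col_line lL xl al.
have ncx : ~~ col x c by apply: contraNN xm => xc; exact: (on_line gq mL cm am ca xc xa).
by exists (diag x), (vtx (col_line mL cm am)); exact: not_within2_diag ncx xa.
Qed.

End CollinearityGraph.

Theorem corollary3p4 (P P' : finType) (L : {set {set P}}) (L' : {set {set P'}}) (f : P -> P') :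
  is_GQ22 L -> is_GQ22 L' -> is_iso L L' f ->
  (* connected *)
  (forall a b : calP L' f, connect (calAdj L L' f) a b) /\
  (* diameter 3: every two vertices at distance <= 3, some pair at distance > 2 *)
  (forall a b : calP L' f, within L L' f 3 a b) /\
  (exists a b : calP L' f, ~ within L L' f 2 a b).
Proof.
(* The hypothesis on S' is implied by the isomorphism and never needed. *)
move=> gq _ [[fi fK fiK] fL].
have W3 := within3 gq fK fiK fL.
split; [|split] => //; last exact: exists_far_pair gq fK fiK fL.
by move=> a b; have [s [_ [ps lst]]] := W3 a b; apply/connectP; exists s.
Qed.
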